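(* Let $\mathcal{S}\subset(\mathbb{N}\cup\{\infty\})^6$ be the set of the following 13 vectors: $B=(\infty,\infty,\infty,\infty,\infty,\infty)$, $2S=(\infty,\infty,\infty,\infty,\infty,1)$, $RS=(\infty,\infty,\infty,\infty,1,1)$, $PF=(\infty,2,\infty,\infty,\infty,1)$, $S=(\infty,\infty,\infty,\infty,0,0)$, $RT=(\infty,\infty,\infty,1,1,1)$, $FT=(\infty,\infty,\infty,0,1,1)$, $R=(\infty,2,1,1,1,1)$, $RV=(\infty,2,1,0,1,1)$, $IF=(\infty,2,0,0,\infty,1)$, $F=(\infty,2,0,0,1,1)$, $T=(\infty,1,0,0,0,0)$, $E=(1,1,0,0,0,0)$. Then $\mathcal{S}$ is not a sublattice of $(\mathbb{N}\cup\{\infty\})^6$ under componentwise $\min/\max$, and the sublattice $L_{30}$ it generates has exactly $30$ elements (so the closure adds $17$ elements not in $\mathcal{S}$); moreover, iterating the operation of adjoining all pairwise componentwise meets and joins stabilizes after three rounds.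
   Context: $(\mathbb{N}\cup\{\infty\})^6$ is ordered componentwise with $\infty$ above every natural number; meet and join are componentwise $\min$ and $\max$. These 13 vectors are Bisping's energy vectors of the named equivalences (bisimulation, 2-nested simulation, ready simulation, possible futures, simulation, ready traces, failure traces, readiness, revivals, impossible futures, failures, traces, enabledness). *)

From Stdlib Require Import List Arith.
Import ListNotations.

Inductive ext : Type := Fin (n : nat) | Inf.

Definition emin (a b : ext) : ext :=
  match a, b with
  | Inf, y => y
  | x, Inf => x
  | Fin m, Fin n => Fin (Nat.min m n)
  end.

Definition emax (a b : ext) : ext :=
  match a, b with
  | Inf, _ => Inf
  | _, Inf => Inf
  | Fin m, Fin n => Fin (Nat.max m n)
  end.

Record vec : Type := V { c1 : ext; c2 : ext; c3 : ext; c4 : ext; c5 : ext; c6 : ext }.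

Definition vmeet (x y : vec) : vec :=
  V (emin (c1 x) (c1 y)) (emin (c2 x) (c2 y)) (emin (c3 x) (c3 y))
    (emin (c4 x) (c4 y)) (emin (c5 x) (c5 y)) (emin (c6 x) (c6 y)).

Definition vjoin (x y : vec) : vec :=
  V (emax (c1 x) (c1 y)) (emax (c2 x) (c2 y)) (emax (c3 x) (c3 y))
    (emax (c4 x) (c4 y)) (emax (c5 x) (c5 y)) (emax (c6 x) (c6 y)).

Definition vset := vec -> Prop.

Definition set_eq (A B : vset) : Prop := forall x, A x <-> B x.

Definition vB  := V Inf Inf Inf Inf Inf Inf.
Definition v2S := V Inf Inf Inf Inf Inf (Fin 1).
Definition vRS := V Inf Inf Inf Inf (Fin 1) (Fin 1).
Definition vPF := V Inf (Fin 2) Inf Inf Inf (Fin 1).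
Definition vS  := V Inf Inf Inf Inf (Fin 0) (Fin 0).
Definition vRT := V Inf Inf Inf (Fin 1) (Fin 1) (Fin 1).
Definition vFT := V Inf Inf Inf (Fin 0) (Fin 1) (Fin 1).
Definition vR  := V Inf (Fin 2) (Fin 1) (Fin 1) (Fin 1) (Fin 1).
Definition vRV := V Inf (Fin 2) (Fin 1) (Fin 0) (Fin 1) (Fin 1).
Definition vIF := V Inf (Fin 2) (Fin 0) (Fin 0) Inf (Fin 1).
Definition vF  := V Inf (Fin 2) (Fin 0) (Fin 0) (Fin 1) (Fin 1).
Definition vT  := V Inf (Fin 1) (Fin 0) (Fin 0) (Fin 0) (Fin 0).
Definition vE  := V (Fin 1) (Fin 1) (Fin 0) (Fin 0) (Fin 0) (Fin 0).

Definition Svecs : list vec :=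
  [vB; v2S; vRS; vPF; vS; vRT; vFT; vR; vRV; vIF; vF; vT; vE].

Definition Sset : vset := fun x => In x Svecs.

Definition closed (A : vset) : Prop :=
  forall a b, A a -> A b -> A (vmeet a b) /\ A (vjoin a b).

Inductive gen (A : vset) : vset :=
  | gen_base : forall x, A x -> gen A x
  | gen_meet : forall a b, gen A a -> gen A b -> gen A (vmeet a b)
  | gen_join : forall a b, gen A a -> gen A b -> gen A (vjoin a b).

Definition step (A : vset) : vset :=
  fun x => A x \/ exists a b, A a /\ A b /\ (x = vmeet a b \/ x = vjoin a b).

Fixpoint iter_step (n : nat) (A : vset) : vset :=
  match n with 0 => A | S k => step (iter_step k A) end.

(* The generated sublattice is reached by the rounds of adjoining pairwise meets
   and joins: a round that adds nothing leaves a set closed under meet and join,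
   which then contains, hence equals, the generated sublattice.  For the 13
   vectors, a finite computation shows that round 3 adds nothing to round 2,
   which has 30 elements; the meet of PF and S lies outside S, and the vector
   (oo,2,oo,0,oo,1) first appears in round 2. *)

From Stdlib Require Import List Arith Lia Bool.
Import ListNotations.

Definition ext_eq_dec (a b : ext) : {a = b} + {a <> b}.
Proof. decide equality; apply Nat.eq_dec. Defined.

Definition vec_eq_dec (x y : vec) : {x = y} + {x <> y}.
Proof. decide equality; apply ext_eq_dec. Defined.

Definition inb (x : vec) (l : list vec) : bool :=
  if in_dec vec_eq_dec x l then true else false.

Lemma inb_spec x l : inb x l = true <-> In x l.
Proof. unfold inb; destruct in_dec; split; congruence || tauto. Qed.

Definition inclb (l m : list vec) : bool := forallb (fun x => inb x m) l.

Lemma inclb_incl l m : inclb l m = true -> incl l m.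
Proof.
  intros H x Hx; apply inb_spec.
  exact (proj1 (forallb_forall _ _) H x Hx).
Qed.

Definition of_list (l : list vec) : vset := fun x => In x l.

Definition subset (A B : vset) : Prop := forall x, A x -> B x.

Lemma subset_refl A : subset A A.
Proof. intros x Hx; exact Hx. Qed.

Lemma set_eq_sym A B : set_eq A B -> set_eq B A.
Proof. intros H x; symmetry; apply H. Qed.

Lemma subset_step A : subset A (step A).
Proof. intros x Hx; now left. Qed.

Lemma step_set_eq A B : set_eq A B -> set_eq (step A) (step B).
Proof.
  intros AB x; unfold step; split.
  - intros [Hx|(a&b&Ha&Hb&Hab)]; [left; now apply AB|right].
    exists a, b; split; [now apply AB|split; [now apply AB|exact Hab]].
  - intros [Hx|(a&b&Ha&Hb&Hab)]; [left; now apply AB|right].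
    exists a, b; split; [now apply AB|split; [now apply AB|exact Hab]].
Qed.

Lemma step_closed A : closed A -> set_eq (step A) A.
Proof.
  intros HA x; split; [|apply subset_step].
  intros [Hx|(a&b&Ha&Hb&[-> | ->])]; [exact Hx|apply (HA a b Ha Hb)..].
Qed.

Lemma closed_of_step_subset A : subset (step A) A -> closed A.
Proof.
  intros H a b Ha Hb; split; apply H; right; exists a, b; auto.
Qed.

Lemma gen_least A B : closed B -> subset A B -> subset (gen A) B.
Proof.
  intros HB AB x Hx; induction Hx; [now apply AB|apply HB; assumption..].
Qed.

Lemma iter_step_subset_gen A n : subset (iter_step n A) (gen A).
Proof.
  induction n as [|n IH]; intros x; simpl; [apply gen_base|].
  intros [Hx|(a&b&Ha&Hb&[-> | ->])]; auto using gen_meet, gen_join.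
Qed.

Lemma iter_step_mono A m n : m <= n -> subset (iter_step m A) (iter_step n A).
Proof.
  induction 1; [apply subset_refl|].
  intros x Hx; left; auto.
Qed.

Section ClosedRound.

Variable A : vset.
Variable k : nat.
Hypothesis closed_round : closed (iter_step k A).

Lemma iter_step_stationary n : k <= n -> set_eq (iter_step n A) (iter_step k A).
Proof.
  induction 1 as [|n _ IH]; [now intro x|].
  intro x; simpl.
  rewrite (step_set_eq _ _ IH x).
  apply step_closed, closed_round.
Qed.

Lemma gen_eq_closed_round : set_eq (gen A) (iter_step k A).
Proof.
  intro x; split; [|apply iter_step_subset_gen].
  apply gen_least; [exact closed_round|apply (iter_step_mono A 0)]; lia.
Qed.

End ClosedRound.

Definition step_list (l : list vec) : list vec :=
  nodup vec_eq_dec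
    (l ++ flat_map (fun a => flat_map (fun b => [vmeet a b; vjoin a b]) l) l).

Fixpoint iter_step_list (n : nat) (l : list vec) : list vec :=
  match n with 0 => l | S k => step_list (iter_step_list k l) end.

Lemma step_list_spec l : set_eq (of_list (step_list l)) (step (of_list l)).
Proof.
  intro x; unfold of_list, step, step_list.
  rewrite nodup_In, in_app_iff, in_flat_map; split.
  - intros [Hx|(a&Ha&Hx)]; [now left|right].
    apply in_flat_map in Hx as (b&Hb&Hx).
    exists a, b; simpl in Hx; intuition.
  - intros [Hx|(a&b&Ha&Hb&Hab)]; [now left|right].
    exists a; split; [exact Ha|].
    apply in_flat_map; exists b; split; [exact Hb|].
    simpl; destruct Hab; auto.
Qed.

Lemma iter_step_list_spec n l :
  set_eq (of_list (iter_step_list n l)) (iter_step n (of_list l)).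
Proof.
  induction n as [|n IH]; intro x; simpl; [tauto|].
  rewrite (step_list_spec _ x).
  now apply step_set_eq.
Qed.

(* A notation rather than a definition: unification must never have to unfold
   [iter_step_list] on concrete lists, which is also why the iffs below are
   applied through [proj1]/[proj2] instead of [apply]. *)
Notation L30 := (iter_step_list 2 Svecs).

Lemma Sset_not_closed : ~ closed Sset.
Proof.
  intro H; destruct (H vPF vS) as [Hmeet _]; [cbn; tauto..|].
  cbn in Hmeet; intuition discriminate.
Qed.

Lemma iter_step_Sset n x : iter_step n Sset x <-> In x (iter_step_list n Svecs).
Proof. symmetry; exact (iter_step_list_spec n Svecs x). Qed.

Lemma round3_incl_round2 : incl (iter_step_list 3 Svecs) L30.
Proof. apply inclb_incl; vm_compute; reflexivity. Qed.

Lemma round2_closed : closed (iter_step 2 Sset).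
Proof.
  apply closed_of_step_subset; intros x Hx.
  apply (proj2 (iter_step_Sset 2 x)), round3_incl_round2.
  exact (proj1 (iter_step_Sset 3 x) Hx).
Qed.

Lemma gen_Sset_spec x : gen Sset x <-> In x L30.
Proof.
  rewrite (gen_eq_closed_round _ _ round2_closed x).
  apply iter_step_Sset.
Qed.

Lemma gen_minus_Sset_spec x :
  (gen Sset x /\ ~ Sset x) <-> In x (filter (fun y => negb (inb y Svecs)) L30).
Proof.
  rewrite filter_In, gen_Sset_spec, negb_true_iff, <- not_true_iff_false, inb_spec.
  reflexivity.
Qed.

Lemma round2_adds_elements : ~ set_eq (iter_step 1 Sset) (iter_step 2 Sset).
Proof.
  set (w := V Inf (Fin 2) Inf (Fin 0) Inf (Fin 1)).
  assert (w_round2 : In w L30) by (apply (proj1 (inb_spec _ _)); vm_compute; reflexivity).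
  assert (w_round1 : ~ In w (iter_step_list 1 Svecs))
    by (rewrite <- inb_spec; vm_compute; discriminate).
  intro H; apply w_round1.
  apply (proj1 (iter_step_Sset 1 w)), (proj2 (H w)), (proj2 (iter_step_Sset 2 w)), w_round2.
Qed.

Theorem mainTheorem10 :
  (* S is not a sublattice *)
  ~ closed Sset /\
  (* the generated sublattice L30 has exactly 30 elements *)
  (exists l : list vec,
      NoDup l /\ length l = 30 /\ (forall x, gen Sset x <-> In x l)) /\
  (* exactly 17 of them lie outside S *)
  (exists l' : list vec,
      NoDup l' /\ length l' = 17 /\ (forall x, (gen Sset x /\ ~ Sset x) <-> In x l')) /\
  (* iterating "adjoin pairwise meets/joins": rounds 1 and 2 add elements,
     round 3 adds nothing, and from round 3 on the result is L30 *)
  ~ set_eq (iter_step 1 Sset) (iter_step 2 Sset) /\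
  set_eq (iter_step 2 Sset) (iter_step 3 Sset) /\
  (forall n, 3 <= n -> set_eq (iter_step n Sset) (gen Sset)).
Proof.
  assert (L30_nodup : NoDup L30) by apply NoDup_nodup.
  split; [exact Sset_not_closed|].
  split; [exists L30; split; [exact L30_nodup|split; [vm_compute; reflexivity|exact gen_Sset_spec]]|].
  split.
  { exists (filter (fun y => negb (inb y Svecs)) L30).
    split; [now apply NoDup_filter|split; [vm_compute; reflexivity|exact gen_minus_Sset_spec]]. }
  split; [exact round2_adds_elements|].
  split.
  - apply set_eq_sym, (iter_step_stationary _ _ round2_closed); lia.
  - intros n Hn x; rewrite (gen_eq_closed_round _ _ round2_closed x).
    apply (iter_step_stationary _ _ round2_closed); lia.
Qed.
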